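(* Let $G$ act 3-discontinuously and 2-cocompactly on a compactum $T$ and let $A$ be as in the context. Let $B\subset A$ be infinite, $d\ge 1$ an integer, and $C=N_d(B)$ the set of vertices of $\Gamma_A$ at $\Gamma_A$-distance at most $d$ from $B$. Then a point of $T$ is an accumulation point of $C$ if and only if it is an accumulation point of $B$. In particular, if $(\mathbf b_n)$, $(\mathbf c_n)$ are sequences in $A$ with $d_A(\mathbf b_n,\mathbf c_n)$ uniformly bounded, then $\mathbf b_n\to p\in T$ if and only if $\mathbf c_n\to p$.
   Context: A compactum is a compact Hausdorff space ($\ge3$ points); 3-discontinuous: the induced action on 3-element subsets of $T$ is properly discontinuous; 2-cocompact: the induced action on 2-element subsets is cocompact. An entourage is a neighborhood of the diagonal in the space $S^2T$ of unordered pairs of points of $T$; a set $U\subset T$ is $\mathbf e$-small if $\{x,y\}\in\mathbf e$ for all $x,y\in U$. Entourages $\mathbf a,\mathbf b$ are unlinked if $T=a\cup b$ with $a$ $\mathbf a$-small and $b$ $\mathbf b$-small, linked ($\mathbf a\#\mathbf b$) otherwise. Here $A=G\mathbf a_0$ is the $G$-orbit of an entourage $\mathbf a_0$ linked with itself (so $A$ is discrete: each entourage is linked with only finitely many elements of $A$). $\Gamma_A$ is the graph with vertex set $A$ and edges $\{\mathbf a,\mathbf b\}$ with $\mathbf a\#\mathbf b$; $d_A$ is its graph distance (possibly $\infty$). A point $p\in T$ is an accumulation point of $B\subset A$ if for every open $o\ni p$ in $T$ there are infinitely many $\mathbf b\in B$ with $T\setminus o$ $\mathbf b$-small; $\mathbf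 b_n\to p$ means for every open $o\ni p$, $T\setminus o$ is $\mathbf b_n$-small for all large $n$. *)

From Stdlib Require Import List Classical.

Set Implicit Arguments.

Definition is_topology (X : Type) (op : (X -> Prop) -> Prop) : Prop :=
  op (fun _ => True) /\
  (forall U V, op U -> op V -> op (fun x => U x /\ V x)) /\
  (forall F : (X -> Prop) -> Prop, (forall U, F U -> op U) ->
     op (fun x => exists U, F U /\ U x)).

Definition compact_set (X : Type) (op : (X -> Prop) -> Prop) (K : X -> Prop) : Prop :=
  forall F : (X -> Prop) -> Prop,
    (forall U, F U -> op U) ->
    (forall x, K x -> exists U, F U /\ U x) ->
    exists l : list (X -> Prop),
      (forall U, In U l -> F U) /\ (forall x, K x -> exists U, In U l /\ U x).

Definition hausdorff (X : Type) (op : (X -> Prop) -> Prop) : Prop :=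
  forall x y, x <> y -> exists U V, op U /\ op V /\ U x /\ V y /\
    (forall z, U z -> V z -> False).

Definition prod_open (X Y : Type) (opX : (X -> Prop) -> Prop) (opY : (Y -> Prop) -> Prop)
  (W : X * Y -> Prop) : Prop :=
  forall p, W p -> exists a b, opX a /\ opY b /\ a (fst p) /\ b (snd p) /\
    (forall x y, a x -> b y -> W (x, y)).

Definition compactum (T : Type) (op : (T -> Prop) -> Prop) : Prop :=
  is_topology op /\ compact_set op (fun _ => True) /\ hausdorff op /\
  exists x y z : T, x <> y /\ y <> z /\ x <> z.

Definition finite_set (X : Type) (P : X -> Prop) : Prop :=
  exists l : list X, forall x, P x -> In x l.

Definition is_group (G : Type) (mul : G -> G -> G) (inv : G -> G) (one : G) : Prop :=
  (forall a b c, mul a (mul b c) = mul (mul a b) c) /\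
  (forall a, mul one a = a) /\ (forall a, mul a one = a) /\
  (forall a, mul (inv a) a = one) /\ (forall a, mul a (inv a) = one).

(* An action of G on the space T by homeomorphisms (continuous maps; the
   inverse of act g is act (inv g), hence also continuous). *)
Definition is_action (G T : Type) (mul : G -> G -> G) (one : G)
  (op : (T -> Prop) -> Prop) (act : G -> T -> T) : Prop :=
  (forall x, act one x = x) /\
  (forall g h x, act (mul g h) x = act g (act h x)) /\
  (forall g U, op U -> op (fun x => U (act g x))).

(* 3-discontinuous: the induced action on the space of 3-element subsets is
   properly discontinuous.  Subsets of Theta^3 T are represented by their
   preimages in the space of ordered triples of pairwise distinct points
   (with the product topology); compact sets of the quotient correspond to
   (saturations of) compact sets of ordered distinct triples. *)
Definition three_discontinuous (G T : Type) (op : (T -> Prop) -> Prop)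
  (act : G -> T -> T) : Prop :=
  forall K : T * T * T -> Prop,
    compact_set (prod_open (prod_open op op) op) K ->
    (forall x y z, K (x, y, z) -> x <> y /\ y <> z /\ x <> z) ->
    finite_set (fun g => exists x y z,
                   K (x, y, z) /\ K (act g x, act g y, act g z)).

(* 2-cocompact: there is a compact set K of 2-element subsets (represented by
   ordered pairs of distinct points) whose G-translates cover all 2-element
   subsets. *)
Definition two_cocompact (G T : Type) (op : (T -> Prop) -> Prop)
  (act : G -> T -> T) : Prop :=
  exists K : T * T -> Prop,
    compact_set (prod_open op op) K /\
    (forall x y, K (x, y) -> x <> y) /\
    (forall x y, x <> y -> exists g, K (act g x, act g y)).

(* A subset of S^2 T (unordered pairs, diagonal included) is represented as a
   symmetric relation on T.  Open sets of S^2 T correspond to symmetric open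
   subsets of T * T. *)
Definition entourage (T : Type) (op : (T -> Prop) -> Prop) (e : T -> T -> Prop) : Prop :=
  (forall x y, e x y -> e y x) /\
  exists W : T * T -> Prop,
    prod_open op op W /\
    (forall x y, W (x, y) -> W (y, x)) /\
    (forall x, W (x, x)) /\
    (forall x y, W (x, y) -> e x y).

Definition small (T : Type) (e : T -> T -> Prop) (U : T -> Prop) : Prop :=
  forall x y, U x -> U y -> e x y.

Definition linked (T : Type) (a b : T -> T -> Prop) : Prop :=
  ~ exists (u v : T -> Prop),
      (forall x, u x \/ v x) /\ small a u /\ small b v.

(* g . e = { {g x, g y} : {x, y} in e } *)
Definition ent_act (G T : Type) (inv : G -> G) (act : G -> T -> T)
  (g : G) (e : T -> T -> Prop) : T -> T -> Prop :=
  fun x y => e (act (inv g) x) (act (inv g) y).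

(* The graph Gamma_A: within A n a c  <->  d_A(a, c) <= n
   (a walk of length at most n in Gamma_A from a to c with vertices in A). *)
Fixpoint within (T : Type) (A : (T -> T -> Prop) -> Prop) (n : nat)
  (a c : T -> T -> Prop) : Prop :=
  match n with
  | O => a = c
  | S m => a = c \/ exists b, A b /\ linked a b /\ within A m b c
  end.

Definition nbhd (T : Type) (A B : (T -> T -> Prop) -> Prop) (d : nat)
  (c : T -> T -> Prop) : Prop :=
  A c /\ exists b, B b /\ within A d b c.

Definition acc_point (T : Type) (op : (T -> Prop) -> Prop)
  (B : (T -> T -> Prop) -> Prop) (p : T) : Prop :=
  forall o, op o -> o p ->
    ~ finite_set (fun b => B b /\ small b (fun x => ~ o x)).

Definition conv_to (T : Type) (op : (T -> Prop) -> Prop)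
  (b : nat -> (T -> T -> Prop)) (p : T) : Prop :=
  forall o, op o -> o p ->
    exists N, forall n, N <= n -> small (b n) (fun x => ~ o x).

(* Everything rests on discreteness of A: an entourage u is linked with only
   finitely many translates g.a0.  Shrink u to a symmetric t whose eightfold
   composite lies inside u and a0.  By 3-discontinuity, for all but finitely many g
   the map g^-1 sends no triple of pairwise t-far points to such a triple, and
   such a map contracts the complement of a u-small set into an a0-small one;
   then T splits into a u-small and a g.a0-small set.
   Discreteness plus a Lebesgue-number argument shows that all but finitely
   many members of A are "centred" in a member of any finite open cover, which
   gives: accumulation points of N_1(B) are accumulation points of B (by
   induction, of N_d(B)), and infinite subsets of A accumulate somewhere.  For
   sequences, if c_n stays away from p along a subsequence, either some b_n
   repeats infinitely often (but no single member of A shrinks to a point) or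
   the b_n accumulate, necessarily at p, and then so do the c_n. *)

From Stdlib Require Import List Classical Lia.
From Stdlib Require Import IndefiniteDescription FunctionalExtensionality PropExtensionality.

Lemma finite_subset {X : Type} (P Q : X -> Prop) :
  finite_set Q -> (forall x, P x -> Q x) -> finite_set P.
Proof. intros [l Hl] H. exists l. auto. Qed.

Lemma finite_union {X : Type} (P Q : X -> Prop) :
  finite_set P -> finite_set Q -> finite_set (fun x => P x \/ Q x).
Proof. intros [l1 H1] [l2 H2]. exists (l1 ++ l2). intros x [Px | Qx]; apply in_or_app; auto. Qed.

Lemma finite_union_list {X Y : Type} (l : list Y) (P : Y -> X -> Prop) :
  (forall y, In y l -> finite_set (P y)) ->
  finite_set (fun x => exists y, In y l /\ P y x).
Proof.
  induction l as [| y l IH]; intros H.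
  - exists nil. intros x [y [[] _]].
  - apply (finite_subset _ (fun x => P y x \/ exists y', In y' l /\ P y' x)).
    + apply finite_union; [apply H; left; reflexivity | apply IH; intros; apply H; right; auto].
    + intros x [y' [[<- | Hin] Hx]]; eauto.
Qed.

Lemma finite_image {X Y : Type} (f : Y -> X) (P : Y -> Prop) :
  finite_set P -> finite_set (fun x => exists y, P y /\ x = f y).
Proof. intros [l Hl]. exists (map f l). intros x [y [Py ->]]. apply in_map; auto. Qed.

Definition infinitely_often (P : nat -> Prop) : Prop := forall N, exists n, N <= n /\ P n.

Lemma infinitely_often_pigeonhole {X : Type} (P : nat -> Prop) (c : nat -> X) (l : list X) :
  infinitely_often P -> (forall n, P n -> In (c n) l) ->
  exists e, infinitely_often (fun n => P n /\ c n = e).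
Proof.
  revert P. induction l as [| e l IH]; intros P HP Hc.
  - destruct (HP 0) as [n [_ Pn]]. destruct (Hc n Pn).
  - destruct (classic (infinitely_often (fun n => P n /\ c n = e))) as [H | H]; [eauto |].
    apply not_all_ex_not in H as [N0 HN0].
    destruct (IH (fun n => N0 <= n /\ P n)) as [e' He'].
    + intros N. destruct (HP (N + N0)) as [n [Hn Pn]]. exists n. repeat split; auto; lia.
    + intros n [Hn Pn]. destruct (Hc n Pn) as [He | Hin]; [| exact Hin].
      exfalso. apply HN0. exists n. auto.
    + exists e'. intros N. destruct (He' N) as [n [? [[_ ?] ?]]]. eauto.
Qed.

Lemma list_choice {X Y : Type} (R : X -> Y -> Prop) (l : list X) :
  (forall x, In x l -> exists y, R x y) ->
  exists ly, forall x, In x l -> exists y, In y ly /\ R x y.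
Proof.
  induction l as [| x l IH]; intros H.
  - exists nil. intros x [].
  - destruct (H x (or_introl eq_refl)) as [y Hy].
    destruct IH as [ly Hly]; [intros; apply H; right; auto |].
    exists (y :: ly). intros x' [<- | Hin]; [exists y; split; [left |]; auto |].
    destruct (Hly x' Hin) as [y' [? ?]]. exists y'. split; [right |]; auto.
Qed.

Lemma list_filter_exists {X : Type} (P : X -> Prop) (l : list X) :
  exists l', forall x, In x l' <-> In x l /\ P x.
Proof.
  induction l as [| x l [l' Hl']].
  - exists nil. simpl. tauto.
  - destruct (classic (P x)) as [Px | Px]; [exists (x :: l') | exists l']; intros y; simpl;
      rewrite Hl'; intuition congruence.
Qed.

Section OpenSets.

Context {X : Type} {op : (X -> Prop) -> Prop}.

Lemma open_ext (U V : X -> Prop) : op U -> (forall x, U x <-> V x) -> op V.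
Proof.
  intros HU H. replace V with U; [exact HU |].
  apply functional_extensionality. intros x. apply propositional_extensionality, H.
Qed.

Hypothesis htop : is_topology op.

Lemma open_forall_list {I : Type} (U : I -> X -> Prop) (l : list I) :
  (forall i, In i l -> op (U i)) -> op (fun x => forall i, In i l -> U i x).
Proof.
  destruct htop as [Hfull [Hinter _]].
  induction l as [| i l IH]; intros H.
  - eapply open_ext; [exact Hfull |]. simpl. tauto.
  - eapply open_ext.
    + exact (Hinter _ _ (H i (or_introl eq_refl)) (IH (fun j Hj => H j (or_intror Hj)))).
    + intros x. split.
      * intros [Hi Hl] j [<- | Hj]; auto.
      * intros Hx. split; [apply Hx; left | intros j Hj; apply Hx; right]; auto.
Qed.

Lemma open_exists {I : Type} (P : I -> Prop) (U : I -> X -> Prop) :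
  (forall i, P i -> op (U i)) -> op (fun x => exists i, P i /\ U i x).
Proof.
  destruct htop as [_ [_ Hunion]]. intros H.
  eapply open_ext.
  { apply (Hunion (fun V => exists i, P i /\ V = U i)). intros V [i [Pi ->]]. auto. }
  intros x. split.
  - intros [V [[i [Pi ->]] Vx]]. eauto.
  - intros [i [Pi Ux]]. eauto.
Qed.

End OpenSets.

Section Compactness.

Context {X : Type} {op : (X -> Prop) -> Prop}.
Hypothesis hcomp : compact_set op (fun _ => True).

Lemma compact_indexed_subcover (n : X -> X -> Prop) :
  (forall y, op (n y)) -> (forall y, n y y) ->
  exists ys, forall x, exists y, In y ys /\ n y x.
Proof.
  intros Hop Hself.
  destruct (hcomp (fun U => exists y, U = n y)) as [l [Hl Hcov]].
  - intros U [y ->]. apply Hop.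
  - intros x _. exists (n x). eauto.
  - destruct (list_choice (fun U y => U = n y) l Hl) as [ys Hys].
    exists ys. intros x. destruct (Hcov x I) as [U [HU Ux]].
    destruct (Hys U HU) as [y [Hy ->]]. eauto.
Qed.

Lemma compact_of_open_complement (K U : X -> Prop) :
  op U -> (forall x, K x \/ U x) -> (forall x, U x -> ~ K x) -> compact_set op K.
Proof.
  intros HU HKU HUK F HF Hcov.
  destruct (hcomp (fun V => F V \/ V = U)) as [l [Hl Hc]].
  - intros V [FV | ->]; auto.
  - intros x _. destruct (HKU x) as [Kx | Ux]; [destruct (Hcov x Kx) as [V [? ?]] |]; eauto.
  - destruct (list_filter_exists F l) as [l' Hl']. exists l'. split; [apply Hl' |].
    intros x Kx. destruct (Hc x I) as [V [HV Vx]].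
    destruct (Hl V HV) as [FV | ->]; [exists V; rewrite Hl'; auto |].
    exfalso. exact (HUK x Vx Kx).
Qed.

End Compactness.

Section Products.

Context {X Y : Type} {opX : (X -> Prop) -> Prop} {opY : (Y -> Prop) -> Prop}.
Hypotheses (tX : is_topology opX) (tY : is_topology opY).

Lemma prod_open_box (a : X -> Prop) (b : Y -> Prop) :
  opX a -> opY b -> prod_open opX opY (fun q => a (fst q) /\ b (snd q)).
Proof. intros Ha Hb q [Hq1 Hq2]. exists a, b. repeat split; auto. Qed.

Lemma prod_open_union (W1 W2 : X * Y -> Prop) :
  prod_open opX opY W1 -> prod_open opX opY W2 -> prod_open opX opY (fun q => W1 q \/ W2 q).
Proof.
  intros H1 H2 q [Hq | Hq]; [destruct (H1 q Hq) as [a [b ?]] | destruct (H2 q Hq) as [a [b ?]]];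
    exists a, b; intuition.
Qed.

Lemma prod_topology : is_topology (prod_open opX opY).
Proof.
  destruct tX as [fX [iX _]], tY as [fY [iY _]].
  split; [| split].
  - intros q _. exists (fun _ => True), (fun _ => True). auto.
  - intros U V HU HV q [Uq Vq].
    destruct (HU q Uq) as [a [b [? [? [? [? Hab]]]]]], (HV q Vq) as [a' [b' [? [? [? [? Hab']]]]]].
    exists (fun x => a x /\ a' x), (fun y => b y /\ b' y). intuition.
  - intros F HF q [U [FU Uq]]. destruct (HF U FU q Uq) as [a [b [? [? [? [? Hab]]]]]].
    exists a, b. intuition eauto.
Qed.

Hypotheses (cX : compact_set opX (fun _ => True)) (cY : compact_set opY (fun _ => True)).

Lemma prod_compact : compact_set (prod_open opX opY) (fun _ => True).
Proof.
  intros F HF Hcov.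
  destruct (functional_choice (fun q W => F W /\ W q) (fun q => Hcov q I)) as [w Hw].
  assert (Hbox : forall q, exists ab : (X -> Prop) * (Y -> Prop),
             opX (fst ab) /\ opY (snd ab) /\ fst ab (fst q) /\ snd ab (snd q) /\
             forall x y, fst ab x -> snd ab y -> w q (x, y)).
  { intros q. destruct (Hw q) as [Fq wq].
    destruct (HF _ Fq q wq) as [a [b Hab]]. exists (a, b). exact Hab. }
  apply functional_choice in Hbox as [ab Hab].
  assert (Hys : forall x, exists ys, forall y, exists y0, In y0 ys /\ snd (ab (x, y0)) y).
  { intros x. apply (compact_indexed_subcover cY (fun y0 => snd (ab (x, y0)))).
    - intros y0. apply Hab.
    - intros y0. apply (Hab (x, y0)). }
  apply functional_choice in Hys as [ys Hys'].
  set (tube := fun x x' => forall y0, In y0 (ys x) -> fst (ab (x, y0)) x').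
  assert (Htube : forall x, opX (tube x)).
  { intros x. apply (open_forall_list tX (fun y0 => fst (ab (x, y0)))). intros y0 _. apply Hab. }
  assert (Htube_self : forall x, tube x x) by (intros x y0 _; apply (Hab (x, y0))).
  destruct (compact_indexed_subcover cX tube Htube Htube_self) as [xs Hxs].
  exists (flat_map (fun x => map (fun y0 => w (x, y0)) (ys x)) xs). split.
  - intros W HW. apply in_flat_map in HW as [x [_ HW]].
    apply in_map_iff in HW as [y0 [<- _]]. apply Hw.
  - intros [x' y] _. destruct (Hxs x') as [x [Hx Hx']].
    destruct (Hys' x y) as [y0 [Hy0 Hy]].
    exists (w (x, y0)). split.
    + apply in_flat_map. exists x. split; [exact Hx |].
      apply (in_map (fun y1 => w (x, y1))). exact Hy0.
    + apply (Hab (x, y0)); auto.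
Qed.

End Products.

Section CompactHausdorff.

Context {X : Type} {op : (X -> Prop) -> Prop}.
Hypotheses (htop : is_topology op) (hcomp : compact_set op (fun _ => True))
  (hhaus : hausdorff op).

Lemma compact_hausdorff_regular (o : X -> Prop) (p : X) :
  op o -> o p ->
  exists n m, op n /\ op m /\ n p /\ (forall x, n x -> m x -> False) /\
    (forall x, ~ o x -> m x).
Proof.
  intros Ho op_p.
  assert (Hsep : forall y, exists UN : (X -> Prop) * (X -> Prop),
    op (fst UN) /\ fst UN y /\ op (snd UN) /\ snd UN p /\
    (o y -> forall x, fst UN x -> o x) /\
    (~ o y -> forall x, fst UN x -> snd UN x -> False)).
  { intros y. destruct (classic (o y)) as [oy | oy].
    - exists (o, fun _ => True). simpl. intuition. apply htop.
    - assert (Hpy : p <> y) by (intros ->; auto).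
      destruct (hhaus p y Hpy) as [N [U [? [? [? [? Hd]]]]]].
      exists (U, N). simpl. intuition eauto. }
  apply functional_choice in Hsep as [UN HUN].
  destruct (compact_indexed_subcover hcomp (fun y => fst (UN y))) as [ys Hys];
    [intros y; apply HUN .. |].
  exists (fun x => forall y, In y ys -> snd (UN y) x),
         (fun x => exists y, (In y ys /\ ~ o y) /\ fst (UN y) x).
  repeat split.
  - apply (open_forall_list htop (fun y => snd (UN y))). intros y _. apply HUN.
  - apply (open_exists htop (fun y => In y ys /\ ~ o y) (fun y => fst (UN y))).
    intros y _. apply HUN.
  - intros y _. apply HUN.
  - intros x Hn [y [[Hy oy] Hx]]. destruct (HUN y) as (_ & _ & _ & _ & _ & Hdisj).
    exact (Hdisj oy x Hx (Hn y Hy)).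
  - intros x ox. destruct (Hys x) as [y [Hy Hx]], (HUN y) as (_ & _ & _ & _ & Hin & _).
    exists y. repeat split; auto.
Qed.

Lemma lebesgue_entourage (P : (X -> Prop) -> Prop) :
  (forall y, exists c, op c /\ c y /\ P c) ->
  exists (W : X * X -> Prop) (cs : list (X -> Prop)),
    prod_open op op W /\ (forall x, W (x, x)) /\ (forall x y, W (x, y) -> W (y, x)) /\
    (forall c, In c cs -> P c) /\
    (forall y, exists c, In c cs /\ forall x, W (x, y) -> c x).
Proof.
  intros Hcover. apply functional_choice in Hcover as [c Hc].
  assert (Hreg : forall y, exists nm : (X -> Prop) * (X -> Prop),
    op (fst nm) /\ op (snd nm) /\ fst nm y /\ (forall x, fst nm x -> snd nm x -> False) /\
    (forall x, ~ c y x -> snd nm x)).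
  { intros y. destruct (Hc y) as (Hcy & cyy & _).
    destruct (compact_hausdorff_regular (c y) y Hcy cyy) as [n [m Hnm]]. exists (n, m). exact Hnm. }
  apply functional_choice in Hreg as [nm Hnm].
  destruct (compact_indexed_subcover hcomp (fun y => fst (nm y))) as [ys Hys];
    [intros y; apply Hnm .. |].
  set (square := fun y (q : X * X) =>
    (c y (fst q) /\ c y (snd q)) \/ (snd (nm y) (fst q) /\ snd (nm y) (snd q))).
  exists (fun q => forall y, In y ys -> square y q), (map c ys). repeat split.
  - apply (open_forall_list (prod_topology htop htop) square). intros y _.
    apply prod_open_union; apply prod_open_box; apply Hc || apply Hnm.
  - intros x y _. destruct (classic (c y x)) as [Hx | Hx]; [left | right; apply Hnm in Hx];
      simpl; auto.
  - intros x1 x2 HW y Hy. destruct (HW y Hy) as [[? ?] | [? ?]]; [left | right]; simpl; auto.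
  - intros c' Hc'. apply in_map_iff in Hc' as [y [<- _]]. apply Hc.
  - intros y0. destruct (Hys y0) as [y [Hy Hy0]]. exists (c y). split; [apply in_map; exact Hy |].
    intros x HW. destruct (HW y Hy) as [[? _] | [_ Hm]]; [assumption |].
    destruct (Hnm y) as (_ & _ & _ & Hdisj & _). contradiction (Hdisj y0 Hy0 Hm).
Qed.

Lemma entourage_halve (V : X * X -> Prop) :
  prod_open op op V -> (forall x, V (x, x)) ->
  exists W, prod_open op op W /\ (forall x, W (x, x)) /\ (forall x y, W (x, y) -> W (y, x)) /\
    (forall x y z, W (x, y) -> W (y, z) -> V (x, z)).
Proof.
  intros HV Hdiag.
  destruct (lebesgue_entourage (fun c => forall y z, c y -> c z -> V (y, z)))
    as [W [cs [HW [Wrefl [Wsym [Hcs Hball]]]]]].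
  - intros y. destruct (HV (y, y) (Hdiag y)) as [a [b [Ha [Hb [ay [By Hab]]]]]].
    exists (fun z => a z /\ b z). repeat split; try tauto.
    + apply htop; auto.
    + intros z1 z2 [? _] [_ ?]. apply Hab; auto.
  - exists W. repeat split; auto. intros x y z Wxy Wyz.
    destruct (Hball y) as [c [Hc Hcy]]. apply (Hcs c Hc); apply Hcy; auto.
Qed.

End CompactHausdorff.

Lemma linked_self_uncovered {T : Type} {a : T -> T -> Prop} (s1 s2 : T -> Prop) :
  linked a a -> small a s1 -> small a s2 -> exists x, ~ s1 x /\ ~ s2 x.
Proof.
  intros Ha H1 H2. apply NNPP. intros Hno. apply Ha. exists s1, s2. repeat split; auto.
  intros x. apply NNPP. intros Hx. apply Hno. exists x. tauto.
Qed.

Section Collapse.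

Context {T : Type} {f : T -> T} {t t2 t4 a u : T -> T -> Prop}.
Hypotheses (f_surj : forall y, exists x, f x = y)
  (t_sym : forall x y, t x y -> t y x) (t2_sym : forall x y, t2 x y -> t2 y x)
  (t4_sym : forall x y, t4 x y -> t4 y x)
  (t_refl : forall x, t x x) (t2_refl : forall x, t2 x x) (t4_refl : forall x, t4 x x)
  (t_t_t2 : forall x y z, t x y -> t y z -> t2 x z)
  (t2_t2_t4 : forall x y z, t2 x y -> t2 y z -> t4 x z)
  (t4_t4_a : forall x y z, t4 x y -> t4 y z -> a x z)
  (t4_u : forall x y, t4 x y -> u x y)
  (a_linked : linked a a).

(* What 3-discontinuity yields for all but finitely many group elements. *)
Hypothesis no_far_triple : forall x y z, ~ t x y -> ~ t y z -> ~ t x z ->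
  ~ t (f x) (f y) -> ~ t (f y) (f z) -> ~ t (f x) (f z) -> False.

Lemma t_t2 x y : t x y -> t2 x y.
Proof. intros. apply (t_t_t2 x y y); auto. Qed.

Lemma t3_t4 x y z w : t x y -> t y z -> t z w -> t4 x w.
Proof. intros. apply (t2_t2_t4 x z w); [apply (t_t_t2 x y z) | apply t_t2]; auto. Qed.

Lemma t4_chain x y z w v : t x y -> t y z -> t z w -> t w v -> t4 x v.
Proof. intros. apply (t2_t2_t4 x z v); [apply (t_t_t2 x y z) | apply (t_t_t2 z w v)]; auto. Qed.

Lemma t2_ball_small x : small a (t2 x).
Proof. intros y z Hy Hz. apply (t4_t4_a y z z); [apply (t2_t2_t4 y x z) |]; auto. Qed.

Lemma t4_ball_small x : small a (t4 x).
Proof. intros y z Hy Hz. apply (t4_t4_a y x z); auto. Qed.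

(* Otherwise p or q would form with c and z a far triple with far images. *)
Lemma far_point_image_near p q z c :
  ~ t2 (f p) (f q) -> ~ t z p -> ~ t z q -> ~ t (f z) (f p) -> ~ t (f z) (f q) ->
  ~ t p c -> ~ t q c -> ~ t z c -> t (f z) (f c).
Proof.
  intros Hpq zp zq fzp fzq pc qc zc. apply NNPP. intros fzc.
  assert (Hp : t (f p) (f c)).
  { apply NNPP. intros H. apply (no_far_triple p c z); auto. }
  assert (Hq : t (f q) (f c)).
  { apply NNPP. intros H. apply (no_far_triple q c z); auto. }
  apply Hpq, (t_t_t2 (f p) (f c) (f q)); auto.
Qed.

Lemma two_spread_pairs_absurd p1 q1 p2 q2 z :
  ~ t2 (f p1) (f q1) -> ~ t2 (f p2) (f q2) ->
  ~ t p1 p2 -> ~ t p1 q2 -> ~ t q1 p2 -> ~ t q1 q2 ->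
  ~ t z p1 -> ~ t z q1 -> ~ t z p2 -> ~ t z q2 ->
  ~ t (f z) (f p1) -> ~ t (f z) (f q1) -> False.
Proof.
  intros H1 H2 h11 h12 h21 h22 z1 z2 z3 z4 fz1 fz2.
  apply H2, (t_t_t2 _ (f z)); [apply t_sym |]; apply (far_point_image_near p1 q1); auto.
Qed.

Definition spread x : Prop := exists y, t x y /\ ~ t2 (f x) (f y).

Lemma t2_a x y : t2 x y -> a x y.
Proof. intros. apply (t4_t4_a x y y); [apply (t2_t2_t4 x y y) |]; auto. Qed.

Lemma not_spread_near x y : ~ spread x -> t x y -> t2 (f x) (f y).
Proof. intros Hx Hxy. apply NNPP. intros H. apply Hx. exists y. auto. Qed.

Lemma not_spread_image_close x y : ~ spread x -> ~ spread y -> a (f x) (f y).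
Proof.
  intros Hx Hy. apply NNPP. intros Ha.
  destruct (linked_self_uncovered _ _ a_linked (t2_ball_small (f x)) (t2_ball_small (f y)))
    as [fz [Hzx Hzy]].
  destruct (f_surj fz) as [z <-].
  apply (no_far_triple x y z); intros H.
  - apply Ha, t2_a, not_spread_near; auto.
  - apply Hzy, not_spread_near; auto.
  - apply Hzx, not_spread_near; auto.
  - apply Ha, t2_a, t_t2; auto.
  - apply Hzy, t_t2; auto.
  - apply Hzx, t_t2; auto.
Qed.

Section FarClusters.

Variables x1 x2 z : T.
Hypotheses (far12 : ~ t4 x1 x2) (far1z : ~ t4 x1 z) (far2z : ~ t4 x2 z).

Lemma clusters_far c d : t x1 c -> t x2 d -> ~ t c d.
Proof. intros h1 h2 h3. apply far12, (t3_t4 x1 c d x2); auto. Qed.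

Lemma cluster1_far_center c : t x1 c -> ~ t z c.
Proof. intros h1 h2. apply far1z, (t3_t4 x1 c c z); auto. Qed.

Lemma cluster2_far_center c : t x2 c -> ~ t z c.
Proof. intros h1 h2. apply far2z, (t3_t4 x2 c c z); auto. Qed.

Lemma center_image_near_one y1 y2 :
  t x1 y1 -> ~ t2 (f x1) (f y1) -> t x2 y2 -> ~ t2 (f x2) (f y2) ->
  (t (f z) (f x1) /\ ~ t (f z) (f y1)) \/ (t (f z) (f y1) /\ ~ t (f z) (f x1)).
Proof.
  intros h1 F1 h2 F2.
  destruct (classic (t (f z) (f x1))) as [A1 | A1], (classic (t (f z) (f y1))) as [B1 | B1];
    auto.
  - exfalso. apply F1, (t_t_t2 _ (f z)); auto.
  - exfalso. apply (two_spread_pairs_absurd x1 y1 x2 y2 z); auto;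
      solve [ apply clusters_far; auto | apply cluster1_far_center; auto
            | apply cluster2_far_center; auto ].
Qed.

(* Choosing f w far from f i1 and f v1, the point w can neither be t-close to
   a cluster nor far from both. *)
Lemma clusters_absurd i1 v1 i2 v2 :
  t x1 i1 -> t x1 v1 -> t x2 i2 -> t x2 v2 ->
  ~ t2 (f i1) (f v1) -> ~ t2 (f i2) (f v2) ->
  t (f z) (f i1) -> t (f z) (f i2) -> ~ t (f z) (f v1) -> ~ t (f z) (f v2) -> False.
Proof.
  intros a1 a2 a3 a4 G1 G2 e1 e2 e3 e4.
  assert (Ev : t (f v1) (f v2)).
  { apply NNPP. intros E. apply (no_far_triple v1 v2 z); auto.
    - apply clusters_far; auto.
    - intros H. apply (cluster2_far_center v2); auto.
    - intros H. apply (cluster1_far_center v1); auto. }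
  destruct (linked_self_uncovered _ _ a_linked (t2_ball_small (f i1)) (t2_ball_small (f v1)))
    as [fw [W1 W2]].
  destruct (f_surj fw) as [w <-].
  assert (fw_fz : ~ t (f w) (f z)) by (intros h; apply W1, (t_t_t2 _ (f z)); auto).
  destruct (classic (exists c, t x1 c /\ t c w)) as [[c [h1 h2]] | Hc1].
  { apply (no_far_triple w v2 z); auto.
    - intros h. apply far12, (t4_chain x1 c w v2 x2); auto.
    - intros h. apply (cluster2_far_center v2); auto.
    - intros h. apply far1z, (t3_t4 x1 c w z); auto.
    - intros h. apply W2, (t_t_t2 _ (f v2)); auto. }
  destruct (classic (exists c, t x2 c /\ t c w)) as [[c [h1 h2]] | Hc2].
  { apply (no_far_triple w v1 z); auto.
    - intros h. apply far12, t4_sym, (t4_chain x2 c w v1 x1); auto.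
    - intros h. apply (cluster1_far_center v1); auto.
    - intros h. apply far2z, (t3_t4 x2 c w z); auto.
    - intros h. apply W2, t_t2; auto. }
  apply (two_spread_pairs_absurd i1 v1 i2 v2 w); auto;
    solve [ apply clusters_far; auto
          | intros h; apply Hc1; eauto | intros h; apply Hc2; eauto
          | intros h; apply W1, t_t2; auto | intros h; apply W2, t_t2; auto ].
Qed.

End FarClusters.

Lemma spread_small : small u spread.
Proof.
  intros x1 x2 [y1 [h1 F1]] [y2 [h2 F2]]. apply t4_u, NNPP. intros far12.
  destruct (linked_self_uncovered _ _ a_linked (t4_ball_small x1) (t4_ball_small x2))
    as [z [z1 z2]].
  assert (far21 : ~ t4 x2 x1) by auto.
  destruct (center_image_near_one x1 x2 z far12 z1 z2 y1 y2 h1 F1 h2 F2) as [[A1 B1] | [A1 B1]],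
    (center_image_near_one x2 x1 z far21 z2 z1 y2 y1 h2 F2 h1 F1) as [[A2 B2] | [A2 B2]].
  - apply (clusters_absurd x1 x2 z far12 z1 z2 x1 y1 x2 y2); auto.
  - apply (clusters_absurd x1 x2 z far12 z1 z2 x1 y1 y2 x2); auto.
  - apply (clusters_absurd x1 x2 z far12 z1 z2 y1 x1 x2 y2); auto.
  - apply (clusters_absurd x1 x2 z far12 z1 z2 y1 x1 y2 x2); auto.
Qed.

Lemma collapse_off_small_set :
  exists s, small u s /\ forall x y, ~ s x -> ~ s y -> a (f x) (f y).
Proof. exists spread. split; [exact spread_small | exact not_spread_image_close]. Qed.

End Collapse.

Lemma linked_sym {T : Type} (e1 e2 : T -> T -> Prop) : linked e1 e2 -> linked e2 e1.
Proof.
  intros H [u [v [Hc [Hu Hv]]]]. apply H. exists v, u. split; [intros x; destruct (Hc x) |]; auto.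
Qed.

Lemma unlinked_split {T : Type} (u e : T -> T -> Prop) :
  linked e e -> ~ linked u e ->
  exists s x, s x /\ small u s /\ small e (fun y => ~ s y).
Proof.
  intros He Hue. apply NNPP in Hue as [s [v [Hc [Hs Hv]]]].
  assert (Hsv : small e (fun y => ~ s y)).
  { intros y1 y2 H1 H2. apply Hv; [destruct (Hc y1) | destruct (Hc y2)]; tauto. }
  destruct (classic (exists x, s x)) as [[x sx] | Hx]; [exists s, x; auto |].
  exfalso. apply He. exists (fun y => ~ s y), (fun y => ~ s y).
  split; [intros y; left; intros sy; apply Hx; eauto | auto].
Qed.

Section Walks.

Context {T : Type} (A : (T -> T -> Prop) -> Prop).

Lemma within_refl d (e : T -> T -> Prop) : within A d e e.
Proof. destruct d; simpl; auto. Qed.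

Lemma within_snoc d (x y z : T -> T -> Prop) :
  within A d x y -> A z -> linked y z -> within A (S d) x z.
Proof.
  revert x. induction d as [| d IH]; intros x Hxy Az Hyz.
  - simpl in Hxy. subst. right. exists z. repeat split; auto using within_refl.
  - destruct Hxy as [-> | [w [Aw [Hxw Hwy]]]].
    + right. exists z. repeat split; auto using within_refl.
    + right. exists w. auto.
Qed.

Lemma within_sym d (x y : T -> T -> Prop) : A x -> within A d x y -> within A d y x.
Proof.
  revert x. induction d as [| d IH]; intros x Ax Hxy.
  - simpl in *. auto.
  - destruct Hxy as [-> | [w [Aw [Hxw Hwy]]]]; [left; auto |].
    apply (within_snoc d y w x); auto. apply linked_sym; auto.
Qed.

End Walks.

Lemma acc_point_mono {T : Type} (op : (T -> Prop) -> Prop) (B C : (T -> T -> Prop) -> Prop) p :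
  (forall e, B e -> C e) -> acc_point op B p -> acc_point op C p.
Proof.
  intros HBC HB o Ho po Hfin. apply (HB o Ho po).
  apply (finite_subset _ _ Hfin). intros e [? ?]; auto.
Qed.

Definition diag_nbhd {T : Type} (op : (T -> Prop) -> Prop) (e : T -> T -> Prop) : Prop :=
  exists V, prod_open op op V /\ (forall x, V (x, x)) /\ forall x y, V (x, y) -> e x y.

Lemma entourage_diag_nbhd {T : Type} (op : (T -> Prop) -> Prop) (e : T -> T -> Prop) :
  entourage op e -> diag_nbhd op e.
Proof. intros [_ [W [HW [_ [Wdiag We]]]]]. exists W. auto. Qed.

Section DiscreteFamily.

Context {T : Type} {op : (T -> Prop) -> Prop}.
Hypotheses (htop : is_topology op) (hcomp : compact_set op (fun _ => True))
  (hhaus : hausdorff op).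

Variable A : (T -> T -> Prop) -> Prop.
Hypotheses (A_diag_nbhd : forall e, A e -> diag_nbhd op e)
  (A_self_linked : forall e, A e -> linked e e)
  (A_discrete : forall u, diag_nbhd op u -> finite_set (fun e => A e /\ linked u e)).

Lemma A_refl e x : A e -> e x x.
Proof. intros Ae. destruct (A_diag_nbhd e Ae) as [V [_ [HV HVe]]]. auto. Qed.

Lemma finite_within_one (b : T -> T -> Prop) : finite_set (fun c => A b /\ within A 1 b c).
Proof.
  destruct (classic (A b)) as [Ab | Ab]; [| exists nil; intros c [? _]; contradiction].
  apply (finite_subset _ (fun c => In c (b :: nil) \/ (A c /\ linked b c))).
  - apply finite_union; [exists (b :: nil); auto | apply A_discrete, A_diag_nbhd, Ab].
  - intros c [_ [-> | [c' [Ac' [Hbc' ->]]]]]; [left; left |]; auto.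
Qed.

Lemma cofinite_small_complement (P : (T -> Prop) -> Prop) :
  (forall y, exists c, op c /\ c y /\ P c) ->
  exists cs L, (forall c, In c cs -> P c) /\
    forall e, A e -> ~ In e L -> exists c, In c cs /\ small e (fun x => ~ c x).
Proof.
  intros Hcover.
  destruct (lebesgue_entourage htop hcomp hhaus P Hcover)
    as [W [cs [HW [Wrefl [Wsym [Hcs Hball]]]]]].
  destruct (A_discrete (fun x y => W (x, y))) as [L HL]; [exists W; auto |].
  exists cs, L. split; [exact Hcs |]. intros e Ae He.
  destruct (unlinked_split (fun x y => W (x, y)) e (A_self_linked e Ae)) as [s [x [sx [Hs Hse]]]].
  { intros Hl. apply He, HL. auto. }
  destruct (Hball x) as [c [Hc Hcx]]. exists c. split; [exact Hc |].
  intros y1 y2 H1 H2. apply Hse; intros Hs'; [apply H1 | apply H2]; apply Hcx, Hs; auto.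
Qed.

Lemma acc_point_exists (S : (T -> T -> Prop) -> Prop) :
  (forall e, S e -> A e) -> ~ finite_set S -> exists q, acc_point op S q.
Proof.
  intros HSA HSinf. apply NNPP. intros Hno.
  destruct (cofinite_small_complement
              (fun c => finite_set (fun e => S e /\ small e (fun x => ~ c x))))
    as [cs [L [Hcs HL]]].
  - intros q. apply NNPP. intros Hq. apply Hno. exists q. intros o Ho oq Hfin.
    apply Hq. exists o. auto.
  - apply HSinf. apply (finite_subset _ (fun e => In e L \/
      exists c, In c cs /\ (S e /\ small e (fun x => ~ c x)))).
    + apply finite_union; [exists L; auto | apply finite_union_list; auto].
    + intros e Se. destruct (classic (In e L)) as [HeL | HeL]; [left; auto |].
      right. destruct (HL e (HSA e Se) HeL) as [c [Hc Hce]]. eauto.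
Qed.

Lemma acc_nbhd_one (B : (T -> T -> Prop) -> Prop) p :
  (forall b, B b -> A b) -> acc_point op (nbhd A B 1) p -> acc_point op B p.
Proof.
  intros HBA Hacc o Ho po [L0 HL0].
  destruct (compact_hausdorff_regular htop hcomp hhaus o p Ho po)
    as [n [m [Hn [Hm [np [Hnm Hom]]]]]].
  destruct (cofinite_small_complement
              (fun c => (forall x, c x -> o x) \/ (forall x, c x -> ~ n x)))
    as [cs [L [Hcs HL]]].
  { intros y. destruct (classic (o y)) as [oy | oy]; [exists o | exists m];
      repeat split; auto. right. intros x mx nx. eauto. }
  apply (Hacc n Hn np).
  apply (finite_subset _ (fun c => exists b, In b (L0 ++ L) /\ (A b /\ within A 1 b c))).
  { apply finite_union_list. intros b _. apply finite_within_one. }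
  intros c [[Ac [b [Bb Hbc]]] Hcn]. exists b. split; [| auto].
  apply in_or_app. destruct (classic (In b L)) as [HbL | HbL]; [auto |].
  destruct (HL b (HBA b Bb) HbL) as [k [Hk Hbk]].
  destruct (Hcs k Hk) as [Hko | Hkn].
  - left. apply HL0. split; [exact Bb |].
    intros x y Hx Hy. apply Hbk; intros H; [apply Hx | apply Hy]; auto.
  - exfalso. assert (Hlinked : linked b c).
    { destruct Hbc as [<- | [c' [_ [Hbc' <-]]]]; auto. }
    apply Hlinked. exists (fun x => ~ k x), k. split; [intros x; destruct (classic (k x)); auto |].
    split; [exact Hbk |]. intros x y Hx Hy. apply Hcn; apply Hkn; auto.
Qed.

Lemma acc_nbhd (B : (T -> T -> Prop) -> Prop) d p :
  (forall b, B b -> A b) -> acc_point op (nbhd A B d) p -> acc_point op B p.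
Proof.
  revert B. induction d as [| d IH]; intros B HBA Hacc.
  - apply (acc_point_mono op (nbhd A B 0)); [| exact Hacc].
    intros c [_ [b [Bb Hbc]]]. simpl in Hbc. subst. exact Bb.
  - apply acc_nbhd_one; [exact HBA |]. apply IH; [intros c [Ac _]; exact Ac |].
    apply (acc_point_mono op (nbhd A B (S d))); [| exact Hacc].
    intros c [Ac [b [Bb [<- | [b' [Ab' [Hbb' Hb'c]]]]]]].
    + split; [exact Ac |]. exists b. split; [| apply within_refl].
      split; [exact Ac |]. exists b. split; [exact Bb | apply within_refl].
    + split; [exact Ac |]. exists b'. split; [| exact Hb'c].
      split; [exact Ab' |]. exists b. split; [exact Bb |].
      right. exists b'. repeat split; auto using within_refl.
Qed.

Lemma point_not_shrinking (e : T -> T -> Prop) p :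
  A e -> ~ (forall o, op o -> o p -> small e (fun x => ~ o x)).
Proof.
  intros Ae H. destruct htop as [_ [Hinter _]].
  apply (A_self_linked e Ae). exists (fun x => x <> p), (fun x => x = p).
  split; [intros x; destruct (classic (x = p)); auto |]. split.
  - intros x y Hx Hy.
    destruct (hhaus p x (not_eq_sym Hx)) as [U1 [V1 [HU1 [HV1 [U1p [V1x Hd1]]]]]].
    destruct (hhaus p y (not_eq_sym Hy)) as [U2 [V2 [HU2 [HV2 [U2p [V2y Hd2]]]]]].
    apply (H (fun z => U1 z /\ U2 z)); [apply Hinter; auto | split; auto | |];
      intros [? ?]; eauto.
  - intros x y -> ->. apply A_refl, Ae.
Qed.

Lemma conv_acc_unique (b : nat -> T -> T -> Prop) p q :
  (forall n, A (b n)) -> conv_to op b p ->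
  acc_point op (fun e => exists n, e = b n) q -> q = p.
Proof.
  intros Hb Hconv Hacc. apply NNPP. intros Hqp.
  destruct (hhaus p q (not_eq_sym Hqp)) as [U [V [HU [HV [Up [Vq HUV]]]]]].
  destruct (Hconv U HU Up) as [N HN].
  apply (Hacc V HV Vq).
  apply (finite_subset _ (fun e => exists k, In k (seq 0 N) /\ e = b k));
    [apply finite_image; exists (seq 0 N); auto |].
  intros e [[n ->] Hn]. exists n. split; [| reflexivity]. apply in_seq. split; [lia |].
  apply NNPP. intros HnN. apply (A_self_linked (b n) (Hb n)).
  exists (fun x => ~ U x), (fun x => ~ V x).
  split; [intros x; destruct (classic (U x)); [right; intros Vx |]; eauto |].
  split; [apply HN; lia | exact Hn].
Qed.

Lemma conv_transfer (b c : nat -> T -> T -> Prop) d p :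
  (forall n, A (b n)) -> (forall n, A (c n)) -> (forall n, within A d (c n) (b n)) ->
  conv_to op b p -> conv_to op c p.
Proof.
  intros Hb Hc Hcb Hconv o Ho po. apply NNPP. intros Hno.
  set (I := fun n => ~ small (c n) (fun x => ~ o x)).
  assert (HI : infinitely_often I).
  { intros N. apply NNPP. intros H. apply Hno. exists N. intros n Hn.
    apply NNPP. intros Hs. apply H. exists n. auto. }
  set (Bs := fun e => exists n, I n /\ e = b n).
  destruct (classic (finite_set Bs)) as [[l Hl] | HBs].
  - destruct (infinitely_often_pigeonhole I b l HI) as [e He].
    { intros n Hn. apply Hl. exists n. auto. }
    destruct (He 0) as [n0 [_ [_ <-]]].
    apply (point_not_shrinking (b n0) p (Hb n0)). intros o' Ho' po'.
    destruct (Hconv o' Ho' po') as [N HN]. destruct (He N) as [n [Hn [_ <-]]]. auto.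
  - destruct (acc_point_exists Bs) as [q Hq]; [intros e [n [_ ->]]; auto | exact HBs |].
    assert (q = p) as ->.
    { apply (conv_acc_unique b p q Hb Hconv). apply (acc_point_mono op Bs); [| exact Hq].
      intros e [n [_ ->]]. eauto. }
    set (Cs := fun e => exists n, I n /\ e = c n).
    assert (HCs : acc_point op Cs p).
    { apply (acc_nbhd Cs d p); [intros e [n [_ ->]]; auto |].
      apply (acc_point_mono op Bs); [| exact Hq]. intros e [n [Hn ->]].
      split; [auto |]. exists (c n). split; [exists n; auto | apply Hcb]. }
    apply (HCs o Ho po). exists nil. intros e [[n [Hn ->]] Hs]. contradiction.
Qed.

End DiscreteFamily.

Section TripleProduct.

Context {X : Type} {op : (X -> Prop) -> Prop}.
Hypotheses (htop : is_topology op) (hcomp : compact_set op (fun _ => True)).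

Lemma far_triples_compact (W : X * X -> Prop) :
  prod_open op op W ->
  compact_set (prod_open (prod_open op op) op)
    (fun q => ~ W (fst (fst q), snd (fst q)) /\ ~ W (snd (fst q), snd q) /\
              ~ W (fst (fst q), snd q)).
Proof.
  intros HW. destruct htop as [Hfull _].
  apply (compact_of_open_complement
           (prod_compact (prod_topology htop htop) (prod_compact htop hcomp hcomp) hcomp)
           _ (fun q => W (fst (fst q), snd (fst q)) \/ W (snd (fst q), snd q) \/
                       W (fst (fst q), snd q))).
  - intros [[x y] z] H. simpl in H.
    destruct H as [H | [H | H]]; destruct (HW _ H) as [a [b [Ha [Hb [ax [bx Hab]]]]]].
    + exists (fun r => a (fst r) /\ b (snd r)), (fun _ => True).
      repeat split; auto using prod_open_box. intros [x' y'] z' [? ?] _. simpl. auto.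
    + exists (fun r => True /\ a (snd r)), b.
      repeat split; auto. { apply (prod_open_box (fun _ => True) a Hfull Ha). }
      intros [x' y'] z' [_ ?] ?. simpl. auto.
    + exists (fun r => a (fst r) /\ True), b.
      repeat split; auto. { apply (prod_open_box a (fun _ => True) Ha Hfull). }
      intros [x' y'] z' [? _] ?. simpl. auto.
  - intros q. tauto.
  - intros q. tauto.
Qed.

End TripleProduct.

Section Orbit.

Context {T G : Type} {op : (T -> Prop) -> Prop} {mul : G -> G -> G} {inv : G -> G} {one : G}
  {act : G -> T -> T}.
Hypotheses (hG : is_group mul inv one) (hact : is_action mul one op act).

Lemma inv_inv g : inv (inv g) = g.
Proof.
  destruct hG as [assoc [mul_1l [mul_1r [mul_Vl _]]]].
  rewrite <- (mul_1r (inv (inv g))), <- (mul_Vl g), assoc, mul_Vl. apply mul_1l.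
Qed.

Lemma act_inv_l g x : act (inv g) (act g x) = x.
Proof.
  destruct hG as [_ [_ [_ [mul_Vl _]]]], hact as [act_1 [act_mul _]].
  rewrite <- act_mul, mul_Vl. apply act_1.
Qed.

Lemma ent_act_linked g (a b : T -> T -> Prop) :
  linked a b -> linked (ent_act inv act g a) (ent_act inv act g b).
Proof.
  intros Hab [u [v [Huv [Hu Hv]]]]. apply Hab.
  exists (fun x => u (act g x)), (fun x => v (act g x)). split; [intros x; apply Huv |].
  split; intros x y Hx Hy; rewrite <- (act_inv_l g x), <- (act_inv_l g y);
    [apply Hu | apply Hv]; auto.
Qed.

Lemma ent_act_diag_nbhd g (e : T -> T -> Prop) :
  diag_nbhd op e -> diag_nbhd op (ent_act inv act g e).
Proof.
  destruct hact as [_ [_ act_cont]]. intros [V [HV [Vdiag Ve]]].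
  exists (fun q => V (act (inv g) (fst q), act (inv g) (snd q))). repeat split.
  - intros q Hq. destruct (HV _ Hq) as [a [b [Ha [Hb [aq [bq Hab]]]]]].
    exists (fun x => a (act (inv g) x)), (fun x => b (act (inv g) x)).
    repeat split; auto.
  - intros x. apply Vdiag.
  - intros x y H. apply Ve, H.
Qed.

Hypotheses (htop : is_topology op) (hcomp : compact_set op (fun _ => True))
  (hhaus : hausdorff op) (h3 : three_discontinuous op act).

Variable a0 : T -> T -> Prop.
Hypotheses (ha0 : diag_nbhd op a0) (ha0_linked : linked a0 a0).

Lemma orbit_discrete (u : T -> T -> Prop) :
  diag_nbhd op u ->
  finite_set (fun e => (exists g, e = ent_act inv act g a0) /\ linked u e).
Proof.
  intros [V [HV [Vdiag Vu]]].
  destruct ha0 as [W0 [HW0 [W0diag W0a0]]].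
  destruct (entourage_halve htop hcomp hhaus (fun q => V q /\ W0 q))
    as [W4 [HW4 [W4refl [W4sym W4comp]]]];
    [apply (prod_topology htop htop); auto | intros x; split; auto |].
  destruct (entourage_halve htop hcomp hhaus W4 HW4 W4refl)
    as [W2 [HW2 [W2refl [W2sym W2comp]]]].
  destruct (entourage_halve htop hcomp hhaus W2 HW2 W2refl)
    as [W1 [HW1 [W1refl [W1sym W1comp]]]].
  set (t := fun x y => W1 (x, y)).
  set (K := fun q : T * T * T => ~ t (fst (fst q)) (snd (fst q)) /\ ~ t (snd (fst q)) (snd q) /\
                                 ~ t (fst (fst q)) (snd q)).
  destruct (h3 K (far_triples_compact htop hcomp W1 HW1)) as [lh Hlh].
  { intros x y z [H1 [H2 H3]]. repeat split; intros <-; unfold t in *; auto. }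
  apply (finite_subset _ (fun e => exists h, In h lh /\ e = ent_act inv act (inv h) a0));
    [apply finite_image; exists lh; auto |].
  intros e [[g ->] Hl].
  destruct (classic (In (inv g) lh)) as [Hin | Hin]; [exists (inv g); rewrite inv_inv; auto |].
  exfalso.
  destruct (@collapse_off_small_set T (act (inv g)) t (fun x y => W2 (x, y))
              (fun x y => W4 (x, y)) a0 u) as [s [Hs Hse]]; unfold t; auto.
  - intros y. exists (act g y). apply act_inv_l.
  - intros x y z H1 H2. apply W0a0, (W4comp x y z H1 H2).
  - intros x y H. apply Vu, (W4comp x y y H (W4refl y)).
  - intros x y z H1 H2 H3 H4 H5 H6. apply Hin, (Hlh (inv g)). exists x, y, z.
    split; repeat split; auto.
  - apply Hl. exists s, (fun x => ~ s x). split; [intros x; apply classic | auto].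
Qed.

End Orbit.

Theorem lemma3p12
  (T : Type) (op : (T -> Prop) -> Prop)
  (G : Type) (mul : G -> G -> G) (inv : G -> G) (one : G)
  (act : G -> T -> T)
  (a0 : T -> T -> Prop)
  (hT : compactum op)
  (hG : is_group mul inv one)
  (hact : is_action mul one op act)
  (h3 : three_discontinuous op act)
  (h2 : two_cocompact op act)
  (ha0 : entourage op a0)
  (hlink : linked a0 a0) :
  let A := fun e => exists g, e = ent_act inv act g a0 in
  (forall (B : (T -> T -> Prop) -> Prop) (d : nat),
     (forall b, B b -> A b) ->
     ~ finite_set B ->
     1 <= d ->
     forall p : T, acc_point op (nbhd A B d) p <-> acc_point op B p) /\
  (forall (b c : nat -> (T -> T -> Prop)) (p : T),
     (forall n, A (b n)) -> (forall n, A (c n)) ->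
     (exists D, forall n, within A D (b n) (c n)) ->
     (conv_to op b p <-> conv_to op c p)).
Proof.
  intros A. destruct hT as [htop [hcomp [hhaus _]]].
  assert (A_diag_nbhd : forall e, A e -> diag_nbhd op e).
  { intros e [g ->]. apply (ent_act_diag_nbhd hact), entourage_diag_nbhd, ha0. }
  assert (A_self_linked : forall e, A e -> linked e e).
  { intros e [g ->]. apply (ent_act_linked hG hact), hlink. }
  pose proof (orbit_discrete hG hact htop hcomp hhaus h3 a0 (entourage_diag_nbhd op a0 ha0) hlink)
    as A_discrete.
  split.
  - intros B d HBA _ _ p. split.
    + apply (acc_nbhd htop hcomp hhaus A A_diag_nbhd A_self_linked A_discrete B d p HBA).
    + apply acc_point_mono. intros b Bb. split; [auto |].
      exists b. split; [exact Bb | apply within_refl].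
  - intros b c p Hb Hc [D HD]. split;
      apply (conv_transfer htop hcomp hhaus A A_diag_nbhd A_self_linked A_discrete _ _ D p);
      auto using within_sym.
Qed.
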